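(* Let $R$ be a representation of $\mathbf{Q}$ with dimension vector $(1,4,1)$ that is globally injective and globally surjective (i.e. $R$ gives a point of $\mathcal{I}(1)$). Then the dimension vectors of the nonzero proper subrepresentations of $R$ are exactly $(0,b,1)$ for $b\in\{0,1,2,3,4\}$.
   Context: The quiver $\mathbf{Q}$ has vertices $-1,0,1$, arrows $\eta_0,\dots,\eta_3:-1\to0$, $\phi_0,\dots,\phi_3:0\to1$ and relations $\phi_i\eta_j+\phi_j\eta_i=0$; a representation consists of vector spaces $V_{-1},V_0,V_1$ and linear maps $f_i:V_{-1}\to V_0$, $g_i:V_0\to V_1$ with $g_if_j+g_jf_i=0$. $R$ is globally injective (resp. surjective) if $\sum\lambda_if_i$ is injective (resp. $\sum\lambda_ig_i$ surjective) for all $\lambda\in\mathbb{C}^4\setminus\{0\}$. $\mathcal{I}(1)$ denotes the set of classes of such globally injective and globally surjective representations of dimension vector $(1,4,1)$, which correspond to locally free rank 2 instanton sheaves of charge 1 on $\mathbb{P}^3$. *)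

(* Quiver representations of Q with arbitrary dimension
   vector (a, b, c) over a field K, with ROW-VECTOR convention:
   a linear map V -> W is a matrix M : 'M_(dim V, dim W), acting as v |-> v *m M.
   So f i : 'M_(a,b) represents f_i : V_{-1} -> V_0 and g i : 'M_(b,c)
   represents g_i : V_0 -> V_1; the composite g_i o f_j is f j *m g i. *)
From HB Require Import structures.
From mathcomp Require Import all_boot all_order all_algebra.
From mathcomp Require Import reals complex.
Set Implicit Arguments. Unset Strict Implicit. Unset Printing Implicit Defensive.
Import GRing.Theory.
Local Open Scope ring_scope.

(* Relations  phi_i eta_j + phi_j eta_i = 0, i.e. g_i f_j + g_j f_i = 0. *)
Definition Q_relations (K : fieldType) (a b c : nat)
  (f : 'I_4 -> 'M[K]_(a, b)) (g : 'I_4 -> 'M[K]_(b, c)) : Prop :=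
  forall i j : 'I_4, f j *m g i + f i *m g j = 0.

Definition globally_injective (K : fieldType) (a b : nat)
  (f : 'I_4 -> 'M[K]_(a, b)) : Prop :=
  forall lam : 'rV[K]_4, lam != 0 -> row_free (\sum_(i < 4) lam 0 i *: f i)%R.

Definition globally_surjective (K : fieldType) (b c : nat)
  (g : 'I_4 -> 'M[K]_(b, c)) : Prop :=
  forall lam : 'rV[K]_4, lam != 0 -> row_full (\sum_(i < 4) lam 0 i *: g i)%R.

Definition is_subrep (K : fieldType) (a b c : nat)
  (f : 'I_4 -> 'M[K]_(a, b)) (g : 'I_4 -> 'M[K]_(b, c))
  (U1 : 'M[K]_a) (U2 : 'M[K]_b) (U3 : 'M[K]_c) : Prop :=
  forall i : 'I_4, (U1 *m f i <= U2)%MS /\ (U2 *m g i <= U3)%MS.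

Definition subrep_dim (K : fieldType) (a b c : nat)
  (U1 : 'M[K]_a) (U2 : 'M[K]_b) (U3 : 'M[K]_c) : nat * nat * nat :=
  (\rank U1, \rank U2, \rank U3)%N.

From mathcomp Require Import all_boot all_order all_algebra.
From mathcomp Require Import reals complex.
Set Implicit Arguments. Unset Strict Implicit. Unset Printing Implicit Defensive.
Local Open Scope ring_scope.
Import GRing.Theory.

(* For dimension vector (1,4,1), global injectivity says exactly that the four
   vectors f_i form a basis of V_0, and global surjectivity that the four
   functionals g_i form a basis of the dual of V_0.  A subrepresentation with W_{-1} <> 0 then contains every f_i, so
   W_0 = V_0, and W_1 <> 0 because W_0 is not killed by all g_i.  A
   subrepresentation with W_1 = 0 has W_0 inside the common kernel of the g_i,
   which is 0.  What remains is W_{-1} = 0 and W_1 = V_1, and then every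
   subspace W_0 of V_0 gives a subrepresentation. *)

Section LinearFamilies.

Variable K : fieldType.

Lemma sum_scale_rows m n (v : 'I_m -> 'rV[K]_n) (lam : 'rV_m) :
  \sum_(i < m) lam 0 i *: v i = lam *m \matrix_i v i.
Proof. by rewrite mulmx_sum_row; apply: eq_bigr => i _; rewrite rowK. Qed.

Lemma sum_scale_cols m n (v : 'I_m -> 'cV[K]_n) (lam : 'rV_m) :
  \sum_(i < m) lam 0 i *: v i = (lam *m \matrix_i (v i)^T)^T.
Proof.
rewrite mulmx_sum_row linear_sum.
by apply: eq_bigr => i _; rewrite rowK linearZ /= trmxK.
Qed.

Lemma row_free_rV n (v : 'rV[K]_n) : row_free v = (v != 0).
Proof. by rewrite /row_free rank_rV; case: (v != 0). Qed.

Lemma row_full_cV n (v : 'cV[K]_n) : row_full v = (v != 0).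
Proof.
by rewrite /row_full -mxrank_tr rank_rV trmx_eq0; case: (v != 0).
Qed.

Lemma unitmx_mul_neq0 n (M : 'M[K]_n) :
  (forall v : 'rV_n, v != 0 -> v *m M != 0) -> M \in unitmx.
Proof.
move=> injM; rewrite unitmxE unitfE; apply/det0P => -[v v_neq0 vM0].
by move: (injM v v_neq0); rewrite vM0 eqxx.
Qed.

Lemma globally_injective_unitmx (f : 'I_4 -> 'rV[K]_4) :
  globally_injective f -> \matrix_i f i \in unitmx.
Proof.
by move=> finj; apply: unitmx_mul_neq0 => lam /finj; rewrite sum_scale_rows row_free_rV.
Qed.

Lemma globally_surjective_unitmx (g : 'I_4 -> 'cV[K]_4) :
  globally_surjective g -> \matrix_i (g i)^T \in unitmx.
Proof.
move=> gsurj; apply: unitmx_mul_neq0 => lam /gsurj.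
by rewrite sum_scale_cols row_full_cV trmx_eq0.
Qed.

End LinearFamilies.

Section Subrepresentations.

Variables (K : fieldType) (f : 'I_4 -> 'rV[K]_4) (g : 'I_4 -> 'cV[K]_4).

Lemma is_subrep_0_1 (U : 'M[K]_4) : is_subrep f g 0 U 1%:M.
Proof. by move=> i; rewrite mul0mx sub0mx submx1. Qed.

Variables (U1 : 'M[K]_1) (U2 : 'M[K]_4) (U3 : 'M[K]_1).
Hypothesis subU : is_subrep f g U1 U2 U3.

Lemma subrep_row_full_mid : globally_injective f -> U1 != 0 -> row_full U2.
Proof.
move=> finj U1_neq0; have U1_full : row_full U1 by rewrite row_full_cV.
have fU2 i : (f i <= U2)%MS.
  apply: submx_trans (proj1 (subU i)).
  by rewrite -{1}(mul1mx (f i)) submxMr // sub1mx.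
rewrite -sub1mx; apply: submx_trans (_ : \matrix_i f i <= U2)%MS.
  by rewrite sub1mx row_full_unit globally_injective_unitmx.
by apply/row_subP => i; rewrite rowK.
Qed.

Lemma subrep_mid_eq0 : globally_surjective g -> U3 = 0 -> U2 = 0.
Proof.
move=> gsurj U3_0; pose G := \matrix_i (g i)^T.
have GU2 : G *m U2^T = 0.
  apply/row_matrixP => i; rewrite row_mul rowK row0 -trmx_mul.
  by have := proj2 (subU i); rewrite U3_0 submx0 => /eqP ->; rewrite trmx0.
apply: trmx_inj; rewrite trmx0 -(mulKmx (globally_surjective_unitmx gsurj) U2^T).
by rewrite GU2 mulmx0.
Qed.

Lemma subrep_dim_cases :
  globally_injective f -> globally_surjective g ->
  let d := subrep_dim U1 U2 U3 in
  [\/ d = (0, 0, 0)%N, d = (1, 4, 1)%N | exists2 b, (b <= 4)%N & d = (0, b, 1)%N].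
Proof.
move=> finj gsurj /=; rewrite /subrep_dim !rank_rV.
have [U1_0 | U1_neq0] := eqVneq U1 0.
  have [U3_0 | _] := eqVneq U3 0.
    by apply: Or31; rewrite (subrep_mid_eq0 gsurj U3_0) mxrank0.
  by apply: Or33; exists (\rank U2) => //; exact: rank_leq_col.
have U2_full := subrep_row_full_mid finj U1_neq0.
have [U3_0 | _] := eqVneq U3 0.
  by move: U2_full; rewrite (subrep_mid_eq0 gsurj U3_0) /row_full mxrank0.
by apply: Or32; rewrite (eqP U2_full).
Qed.

End Subrepresentations.

Theorem mainTheorem10 (R : realType)
  (f : 'I_4 -> 'M[R[i]]_(1, 4)) (g : 'I_4 -> 'M[R[i]]_(4, 1)) :
  Q_relations f g -> globally_injective f -> globally_surjective g ->
  forall d : nat * nat * nat,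
    (exists (U1 : 'M[R[i]]_1) (U2 : 'M[R[i]]_4) (U3 : 'M[R[i]]_1),
        [/\ is_subrep f g U1 U2 U3,
            subrep_dim U1 U2 U3 = d,
            d <> (0, 0, 0)%N & d <> (1, 4, 1)%N])
    <-> (exists b : nat, (b <= 4)%N /\ d = (0, b, 1)%N).
Proof.
move=> _ finj gsurj d; split.
  move=> [U1 [U2 [U3 [subU <- d_neq0 d_neq_full]]]].
  case: (subrep_dim_cases subU finj gsurj) => [d0 | d_full | [b b_le4 ->]].
  - by case: d_neq0.
  - by case: d_neq_full.
  - by exists b.
move=> [b [b_le4 ->]]; exists 0, (pid_mx b), 1%:M.
by split; [exact: is_subrep_0_1 | rewrite /subrep_dim mxrank0 mxrank1 rank_pid_mx | |].
Qed.
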